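(* Let $(X,d^\star)$ be a $\star$-metric space and define $\tilde{d^\star}(x,y)=\min\{1,d^\star(x,y)\}$ for $x,y\in X$. Then $\tilde{d^\star}$ is a $\star$-metric on $X$ (for the same $t$-definer $\star$), and the topology induced by $\tilde{d^\star}$ on $X$ coincides with the topology induced by $d^\star$.
   Context: A $t$-definer is a function $\star:[0,\infty)\times[0,\infty)\to[0,\infty)$ such that for all $a,b,c\ge 0$: $a\star b=b\star a$; $a\star(b\star c)=(a\star b)\star c$; if $a\le b$ then $a\star c\le b\star c$; $a\star 0=a$; and $\star$ is continuous in its first variable with respect to the Euclidean topology. Given a nonempty set $X$ and a $t$-definer $\star$, a $\star$-metric on $X$ is a function $d:X\times X\to[0,\infty)$ such that for all $x,y,z\in X$: $d(x,y)=0$ iff $x=y$; $d(x,y)=d(y,x)$; and $d(x,y)\le d(x,z)\star d(z,y)$. The topology induced by a $\star$-metric $d$ consists of all $U\subseteq X$ such that for each $a\in U$ there is $r>0$ with $\{x\in X: d(a,x)<r\}\subseteq U$. *)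

From Stdlib Require Import Reals.
Open Scope R_scope.

(* A t-definer: an operation on [0,oo).  We represent it as a total function
   R -> R -> R; only its values on [0,oo) x [0,oo) matter, and it must map
   [0,oo) x [0,oo) into [0,oo). *)
Definition t_definer (star : R -> R -> R) : Prop :=
  (forall a b, 0 <= a -> 0 <= b -> 0 <= star a b) /\
  (forall a b, 0 <= a -> 0 <= b -> star a b = star b a) /\
  (forall a b c, 0 <= a -> 0 <= b -> 0 <= c ->
     star a (star b c) = star (star a b) c) /\
  (forall a b c, 0 <= a -> 0 <= b -> 0 <= c -> a <= b ->
     star a c <= star b c) /\
  (forall a, 0 <= a -> star a 0 = a) /\
  (forall a b, 0 <= a -> 0 <= b ->
     forall eps, 0 < eps -> exists delta, 0 < delta /\
       forall a', 0 <= a' -> Rabs (a' - a) < delta ->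
         Rabs (star a' b - star a b) < eps).

Definition star_metric {X : Type} (star : R -> R -> R) (d : X -> X -> R) : Prop :=
  (forall x y, 0 <= d x y) /\
  (forall x y, d x y = 0 <-> x = y) /\
  (forall x y, d x y = d y x) /\
  (forall x y z, d x y <= star (d x z) (d z y)).

Definition star_open {X : Type} (d : X -> X -> R) (U : X -> Prop) : Prop :=
  forall a, U a -> exists r, 0 < r /\ forall x, d a x < r -> U x.

Definition trunc_metric {X : Type} (d : X -> X -> R) : X -> X -> R :=
  fun x y => Rmin 1 (d x y).

From Stdlib Require Import Reals Lra.
Open Scope R_scope.

(* Since [0] is a unit for [star] and [star] is monotone, [a <= star a b] and
   [b <= star a b].  Hence if a side of a triangle is truncated to [1], the
   right-hand side of the truncated triangle inequality is already at least
   [1]; otherwise nothing on the right is truncated and the inequality for [d]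
   applies.  The topologies agree because openness only depends on balls of
   radius at most [1], and for such radii [min 1 t < r] iff [t < r]. *)

Section TDefiner.

Variable star : R -> R -> R.
Hypothesis Hstar : t_definer star.

Lemma le_star_r a b : 0 <= a -> 0 <= b -> b <= star a b.
Proof.
  intros Ha Hb.
  destruct Hstar as [_ [Hcomm [_ [Hmono [Hunit _]]]]].
  assert (Hmono0 : star 0 b <= star a b) by (apply Hmono; lra).
  rewrite Hcomm, Hunit in Hmono0 by lra.
  exact Hmono0.
Qed.

Lemma le_star_l a b : 0 <= a -> 0 <= b -> a <= star a b.
Proof.
  intros Ha Hb.
  destruct Hstar as [_ [Hcomm _]].
  rewrite Hcomm by assumption.
  now apply le_star_r.
Qed.

Lemma Rmin1_star a b c : 0 <= a -> 0 <= b -> c <= star a b ->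
  Rmin 1 c <= star (Rmin 1 a) (Rmin 1 b).
Proof.
  intros Ha Hb Hc.
  assert (Ha' : 0 <= Rmin 1 a) by (apply Rmin_glb; lra).
  assert (Hb' : 0 <= Rmin 1 b) by (apply Rmin_glb; lra).
  pose proof (Rmin_l 1 c).
  destruct (Rle_dec 1 a) as [Ha1 | Ha1]; [| destruct (Rle_dec 1 b) as [Hb1 | Hb1]].
  - rewrite (Rmin_left 1 a) by exact Ha1.
    pose proof (le_star_l 1 (Rmin 1 b) ltac:(lra) Hb'); lra.
  - rewrite (Rmin_left 1 b) by exact Hb1.
    pose proof (le_star_r (Rmin 1 a) 1 Ha' ltac:(lra)); lra.
  - rewrite (Rmin_right 1 a), (Rmin_right 1 b) by lra.
    pose proof (Rmin_r 1 c); lra.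
Qed.

End TDefiner.

Lemma trunc_metric_star_metric {X : Type} (star : R -> R -> R) (d : X -> X -> R) :
  t_definer star -> star_metric star d -> star_metric star (trunc_metric d).
Proof.
  intros Hstar [Dnn [Dzero [Dsym Dtri]]]; unfold trunc_metric.
  split; [| split; [| split]].
  - intros x y; apply Rmin_glb; [lra | apply Dnn].
  - intros x y; rewrite <- Dzero.
    unfold Rmin; destruct (Rle_dec 1 (d x y)); lra.
  - intros x y; now rewrite Dsym.
  - intros x y z; apply Rmin1_star; auto.
Qed.

Lemma star_open_small_radius {X : Type} (d : X -> X -> R) (U : X -> Prop) :
  star_open d U <->
  forall a, U a -> exists r, 0 < r <= 1 /\ forall x, d a x < r -> U x.
Proof.
  split; intros HU a Ha; destruct (HU a Ha) as [r [Hr HUr]].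
  - exists (Rmin r 1); split.
    + split; [apply Rmin_pos | apply Rmin_r]; lra.
    + intros x Hx; apply HUr.
      pose proof (Rmin_l r 1); lra.
  - exists r; split; [lra | exact HUr].
Qed.

Lemma Rmin1_lt r t : r <= 1 -> (Rmin 1 t < r <-> t < r).
Proof.
  intros Hr; unfold Rmin; destruct (Rle_dec 1 t); lra.
Qed.

Lemma star_open_trunc_metric {X : Type} (d : X -> X -> R) (U : X -> Prop) :
  star_open (trunc_metric d) U <-> star_open d U.
Proof.
  rewrite !star_open_small_radius; unfold trunc_metric.
  split; intros HU a Ha; destruct (HU a Ha) as [r [Hr HUr]];
    exists r; split; try exact Hr; intros x Hx; apply HUr.
  - apply Rmin1_lt; [apply Hr | exact Hx].
  - apply (Rmin1_lt r); [apply Hr | exact Hx].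
Qed.

Theorem proposition3p8 (X : Type) (Hne : inhabited X)
  (star : R -> R -> R) (d : X -> X -> R) :
  t_definer star -> star_metric star d ->
  star_metric star (trunc_metric d) /\
  (forall U : X -> Prop, star_open (trunc_metric d) U <-> star_open d U).
Proof.
  intros Hstar Hd; split.
  - exact (trunc_metric_star_metric star d Hstar Hd).
  - apply star_open_trunc_metric.
Qed.
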